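(* Let $\{\mathcal B^{(n)}\}_{n\in\mathbb N}$ be a sequence of infinite matrices $\mathcal B^{(n)}=(\mathcal B^{(n)}_{r,s})_{r,s\ge0}$ and let $b\in\mathbb N$ be such that $\mathcal B^{(n)}_{rs}=0$ whenever $|r-s|>b$, for all $n$. Let $\mathcal B^R$ be a right limit of $\{\mathcal B^{(n)}\}$ along a subsequence $\{n_j\}_j$, and let $M\in\mathbb N$. Then $$\lim_{j\to\infty}C_m^{(n_j)}(\mathcal B^{(n_j)})=D_m(\mathcal B^R_{bM})\quad\text{for }m=1,\dots,M.$$
   Context: $\mathcal B^R=(\mathcal B^R_{r,s})_{r,s\in\mathbb Z}$ is a right limit along $\{n_j\}$ if $\mathcal B^R_{r,s}=\lim_j\mathcal B^{(n_j)}_{n_j+r,n_j+s}$ for all $r,s\in\mathbb Z$ and $\mathcal B^R$ is bounded on $\ell^2(\mathbb Z)$. $\mathcal B^R_{N}$ is the truncation equal to $\mathcal B^R_{r,s}$ for $r,s\in\{-N,\dots,N\}$ and $0$ otherwise. $P_n$ is the projection onto the coordinates $0,\dots,n-1$; $P_-$ on $\ell^2(\mathbb Z)$ is the projection onto coordinates $r<0$. For $m\ge1$, $$C_m^{(n)}(\mathcal B)=\sum_{j=2}^m\frac{(-1)^j}{j}\sum_{\substack{l_1+\dots+l_j=m\\ l_i\ge1}}\frac{\operatorname{Tr}\mathcal B^{l_1}P_n\cdots\mathcal B^{l_j}P_n-\operatorname{Tr}\mathcal B^mP_n}{l_1!\cdots l_j!}$$ (zero for $m=1$), and for a finite-rank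 operator $F$ on $\ell^2(\mathbb Z)$, $$D_m(F)=\sum_{j=1}^m\frac{(-1)^j}{j}\sum_{\substack{l_1+\dots+l_j=m\\ l_i\ge1}}\frac{\operatorname{Tr}\big(\prod_{t=1}^jP_-F^{l_t}P_--P_-F^mP_-\big)}{l_1!\cdots l_j!}.$$ *)

From HB Require Import structures.
From mathcomp Require Import all_boot all_order all_algebra.
From mathcomp Require Import complex.
From mathcomp Require Import reals.
Set Implicit Arguments. Unset Strict Implicit. Unset Printing Implicit Defensive.
Import Order.TTheory GRing.Theory Num.Theory.
Local Open Scope ring_scope.

Section Defs.
Variable R : realType.
Local Notation C := R[i].

Definition cvgC (u : nat -> C) (l : C) : Prop :=
  forall e : C, 0 < e -> exists J : nat, forall j : nat, (J <= j)%N -> `|u j - l| < e.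

Definition banded (b : nat) (B : nat -> nat -> C) : Prop :=
  forall r s : nat, (b < r - s)%N || (b < s - r)%N -> B r s = 0.

(* entry (r,s) of the l-th power of a matrix B with bandwidth b:
   (B^(l+1))_{rs} = sum_{t >= 0} B_{rt} (B^l)_{ts}; since B_{rt} = 0 for t > r + b,
   the sum is over t < r + b + 1 (this is the literal infinite sum for banded B). *)
Fixpoint powB (b : nat) (B : nat -> nat -> C) (l : nat) (r s : nat) : C :=
  match l with
  | O => (r == s)%:R
  | l'.+1 => \sum_(t < r + b + 1) B r t * powB b B l' t s
  end.

(* Tr B^{l_1} P_n B^{l_2} P_n ... B^{l_j} P_n *)
Definition trBP (b n : nat) (B : nat -> nat -> C) (j : nat) (l : 'I_j -> nat) : C :=
  \sum_(k : {ffun 'I_j -> 'I_n})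
     \prod_(t < j) powB b B (l t) (k t) (k (ordS t)).

(* Tr B^m P_n *)
Definition trBmP (b n : nat) (B : nat -> nat -> C) (m : nat) : C :=
  \sum_(k < n) powB b B m k k.

Definition compo (j m : nat) (l : {ffun 'I_j -> 'I_m.+1}) : bool :=
  [forall t, (0 < l t)%N] && ((\sum_(t < j) (l t : nat))%N == m).

Definition factprod (j m : nat) (l : {ffun 'I_j -> 'I_m.+1}) : C :=
  (\prod_(t < j) (l t : nat)`!)%:R.

Definition Cmn (b : nat) (m n : nat) (B : nat -> nat -> C) : C :=
  \sum_(2 <= j < m.+1)
    ((-1) ^+ j / j%:R) *
    \sum_(l : {ffun 'I_j -> 'I_m.+1} | compo l)
       (trBP b n B (fun t => (l t : nat)) - trBmP b n B m) / factprod l.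

Definition extZ (B : nat -> nat -> C) (r s : int) : C :=
  if (0 <= r) && (0 <= s) then B `|r|%N `|s|%N else 0.

(* boundedness on l^2(Z) of an infinite matrix A = (A_{rs})_{r,s in Z}:
   ||A x|| <= K ||x|| for all finitely supported x *)
Definition boundedZ (A : int -> int -> C) : Prop :=
  exists K : C, forall (N N' : nat) (x : int -> C),
    \sum_(i < (2 * N').+1)
       `| \sum_(k < (2 * N).+1) A (i%:Z - N'%:Z) (k%:Z - N%:Z) * x (k%:Z - N%:Z) | ^+ 2
    <= K * \sum_(k < (2 * N).+1) `| x (k%:Z - N%:Z) | ^+ 2.

Definition right_limit (Bs : nat -> nat -> nat -> C) (nj : nat -> nat)
    (BR : int -> int -> C) : Prop :=
  (forall r s : int,
     cvgC (fun j => extZ (Bs (nj j)) ((nj j)%:Z + r) ((nj j)%:Z + s)) (BR r s))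
  /\ boundedZ BR.

(* the truncation B^R_N, viewed on its support {-N..N}^2:
   index i : 'I_(2N+1) stands for the integer i - N *)
Definition truncZ (BR : int -> int -> C) (N : nat) : 'M[C]_((2 * N).+1) :=
  \matrix_(i, k) BR (i%:Z - N%:Z) (k%:Z - N%:Z).

(* P_- : projection onto coordinates r < 0, i.e. i < N *)
Definition Pminus (N : nat) : 'M[C]_((2 * N).+1) :=
  \matrix_(i, k) ((i == k) && (i < N)%N)%:R.

Definition Dm (N m : nat) (F : 'M[C]_((2 * N).+1)) : C :=
  let P := Pminus N in
  \sum_(1 <= j < m.+1)
    ((-1) ^+ j / j%:R) *
    \sum_(l : {ffun 'I_j -> 'I_m.+1} | compo l)
       \tr ((\prod_(t < j) (P * F ^+ (l t : nat) * P)) - P * F ^+ m * P) / factprod l.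

End Defs.

From HB Require Import structures.
From mathcomp Require Import all_boot all_order all_algebra.
From mathcomp Require Import complex.
From mathcomp Require Import reals.
From mathcomp Require Import zify ring.
Set Implicit Arguments. Unset Strict Implicit. Unset Printing Implicit Defensive.
Import Order.TTheory GRing.Theory Num.Theory.
Local Open Scope ring_scope.

(* Expanding the traces into sums over cyclic index sequences k_0, ..., k_j, the
   difference Tr(B^l_0 P_n ... B^l_j P_n) - Tr(B^m P_n) becomes a sum of products of
   entries of powers of B, each weighted by 1[all k_t < n] - 1[k_0 < n].  Only
   sequences reaching an index >= n contribute, and by the band structure such a
   closed walk of total length m never leaves the window of radius bm <= bM around
   n.  So for n > bM the quantity C_m^(n)(B^(n)) is exactly D_m of the window of
   B^(n) at (n, n), and D_m is a polynomial in the window entries, which converge to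
   those of B^R_{bM}. *)

Section SequenceLimits.
Variable K : numFieldType.

Definition cvg_seq (u : nat -> K) (l : K) : Prop :=
  forall e : K, 0 < e -> exists J : nat, forall j : nat, (J <= j)%N -> `|u j - l| < e.

Lemma cvg_seq_eventually u v l (J0 : nat) :
  cvg_seq u l -> (forall j, (J0 <= j)%N -> u j = v j) -> cvg_seq v l.
Proof.
move=> ul euv e e_gt0; have [J HJ] := ul e e_gt0.
exists (maxn J J0) => j; rewrite geq_max => /andP [hJ hJ0].
by rewrite -euv //; apply: HJ.
Qed.

Lemma eq_cvg_seq u v l : cvg_seq u l -> u =1 v -> cvg_seq v l.
Proof. by move=> ul euv; apply: (cvg_seq_eventually (J0 := 0) ul) => j _. Qed.

Lemma cvg_seq_cst c : cvg_seq (fun _ => c) c.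
Proof. by move=> e e_gt0; exists 0%N => j _; rewrite subrr normr0. Qed.

Lemma cvg_seqD u v a c :
  cvg_seq u a -> cvg_seq v c -> cvg_seq (fun j => u j + v j) (a + c).
Proof.
move=> ua vc e e_gt0; have e2_gt0 : 0 < e / 2 by rewrite divr_gt0.
have [J1 H1] := ua _ e2_gt0; have [J2 H2] := vc _ e2_gt0.
exists (maxn J1 J2) => j; rewrite geq_max => /andP [hj1 hj2].
rewrite (_ : _ - _ = (u j - a) + (v j - c)); last by ring.
by rewrite (le_lt_trans (ler_normD _ _)) // [e]splitr ltrD ?H1 ?H2.
Qed.

Lemma cvg_seqN u a : cvg_seq u a -> cvg_seq (fun j => - u j) (- a).
Proof.
move=> ua e e_gt0; have [J HJ] := ua e e_gt0.
by exists J => j hj; rewrite -opprD normrN HJ.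
Qed.

Lemma cvg_seqB u v a c :
  cvg_seq u a -> cvg_seq v c -> cvg_seq (fun j => u j - v j) (a - c).
Proof. by move=> ua vc; apply: cvg_seqD => //; apply: cvg_seqN. Qed.

Lemma cvg_seqM u v a c :
  cvg_seq u a -> cvg_seq v c -> cvg_seq (fun j => u j * v j) (a * c).
Proof.
move=> ua vc e e_gt0.
have c1_gt0 : 0 < `|c| + 1 by rewrite ltr_wpDl.
have a1_gt0 : 0 < `|a| + 1 by rewrite ltr_wpDl.
have [|J1 H1] := ua (e / 2 / (`|c| + 1)); first by rewrite !divr_gt0.
have [|J2 H2] := vc (e / 2 / (`|a| + 1)); first by rewrite !divr_gt0.
have [J3 H3] := vc 1 ltr01.
exists (maxn J1 (maxn J2 J3)) => j; rewrite !geq_max => /and3P [hj1 hj2 hj3].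
have vj_le : `|v j| <= `|c| + 1.
  rewrite -[v j](subrK c) (le_trans (ler_normD _ _)) //.
  by rewrite addrC lerD2l ltW ?H3.
rewrite (_ : _ - _ = (u j - a) * v j + a * (v j - c)); last by ring.
rewrite (le_lt_trans (ler_normD _ _)) // [e]splitr !normrM ltr_leD //.
  rewrite (le_lt_trans (ler_wpM2l _ vj_le)) // -ltr_pdivlMr //; exact: H1.
have a_le : `|a| <= `|a| + 1 by rewrite lerDl.
rewrite (le_trans (ler_wpM2r _ a_le)) // mulrC -ler_pdivlMr //.
exact/ltW/H2.
Qed.

Lemma cvg_seq_sum (I : Type) (r : seq I) (P : pred I) (F : nat -> I -> K) (L : I -> K) :
  (forall i, P i -> cvg_seq (F^~ i) (L i)) ->
  cvg_seq (fun j => \sum_(i <- r | P i) F j i) (\sum_(i <- r | P i) L i).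
Proof.
move=> FL; elim: r => [|x r IHr].
  rewrite [X in cvg_seq _ X]big_nil.
  by apply: (eq_cvg_seq (cvg_seq_cst 0)) => j; rewrite big_nil.
rewrite [X in cvg_seq _ X]big_cons; case: ifP => Px.
  by apply: (eq_cvg_seq (cvg_seqD (FL x Px) IHr)) => j; rewrite big_cons Px.
by apply: (eq_cvg_seq IHr) => j; rewrite big_cons Px.
Qed.

Definition cvg_mx m n (A : nat -> 'M[K]_(m, n)) (A0 : 'M[K]_(m, n)) : Prop :=
  forall i k, cvg_seq (fun j => A j i k) (A0 i k).

Lemma cvg_mx_cst m n (A : 'M[K]_(m, n)) : cvg_mx (fun _ => A) A.
Proof. by move=> i k; apply: cvg_seq_cst. Qed.

Lemma cvg_mxB m n (A B : nat -> 'M[K]_(m, n)) A0 B0 :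
  cvg_mx A A0 -> cvg_mx B B0 -> cvg_mx (fun j => A j - B j) (A0 - B0).
Proof.
move=> AA0 BB0 i k; rewrite !mxE.
by apply: (eq_cvg_seq (cvg_seqB (AA0 i k) (BB0 i k))) => j; rewrite !mxE.
Qed.

Lemma cvg_mxM m n p (A : nat -> 'M[K]_(m, n)) (B : nat -> 'M[K]_(n, p)) A0 B0 :
  cvg_mx A A0 -> cvg_mx B B0 -> cvg_mx (fun j => A j *m B j) (A0 *m B0).
Proof.
move=> AA0 BB0 i k; rewrite mxE.
apply: (eq_cvg_seq (cvg_seq_sum (index_enum 'I_n) (P := xpredT)
  (F := fun j z => A j i z * B j z k) (fun z _ => cvg_seqM (AA0 i z) (BB0 z k)))).
by move=> j; rewrite mxE.
Qed.

Lemma cvg_mx_prod n (I : Type) (r : seq I) (P : pred I) (F : nat -> I -> 'M[K]_n.+1) L :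
  (forall i, P i -> cvg_mx (F^~ i) (L i)) ->
  cvg_mx (fun j => \prod_(i <- r | P i) F j i) (\prod_(i <- r | P i) L i).
Proof.
move=> FL; elim: r => [|x r IHr] a c.
  rewrite [in X in cvg_seq _ X]big_nil.
  by apply: (eq_cvg_seq (cvg_mx_cst 1 a c)) => j; rewrite big_nil.
rewrite [in X in cvg_seq _ X]big_cons; case: ifP => Px.
  by apply: (eq_cvg_seq (cvg_mxM (FL x Px) IHr a c)) => j; rewrite big_cons Px.
by apply: (eq_cvg_seq (IHr a c)) => j; rewrite big_cons Px.
Qed.

Lemma cvg_mx_exp n (A : nat -> 'M[K]_n.+1) A0 e :
  cvg_mx A A0 -> cvg_mx (fun j => A j ^+ e) (A0 ^+ e).
Proof.
move=> AA0; elim: e => [|e IHe] a c.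
  rewrite [in X in cvg_seq _ X]expr0.
  by apply: (eq_cvg_seq (cvg_mx_cst 1 a c)) => j; rewrite expr0.
rewrite [in X in cvg_seq _ X]exprS.
by apply: (eq_cvg_seq (cvg_mxM AA0 IHe a c)) => j; rewrite exprS.
Qed.

Lemma cvg_mxtrace n (A : nat -> 'M[K]_n) A0 :
  cvg_mx A A0 -> cvg_seq (fun j => \tr (A j)) (\tr A0).
Proof. by move=> AA0; apply: cvg_seq_sum => i _; apply: AA0. Qed.

End SequenceLimits.

Section CycleExpansion.
Variable T : comNzRingType.

Lemma delta_mx_conj n (a b c : 'I_n) (Z : 'M[T]_n) :
  delta_mx a b *m Z *m delta_mx c c = Z b c *: delta_mx a c.
Proof.
apply/matrixP => x y; rewrite !mxE (bigD1 c) //= big1 => [|w /negbTE wc]; last first.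
  by rewrite [delta_mx _ _ _ _]mxE wc mulr0.
rewrite mxE (bigD1 b) //= big1 => [|v /negbTE vb]; last by rewrite mxE vb andbF mul0r.
rewrite !mxE !eqxx andbT !addr0.
by case: (x == a); case: (y == c); rewrite ?mulr0 ?mul0r ?mulr1 ?mul1r.
Qed.

Lemma delta_mx_walk n (Z : nat -> 'M[T]_n.+1) (k : nat -> 'I_n.+1) J :
  (\prod_(t < J) (delta_mx (k t) (k t) * Z t)) * delta_mx (k J) (k J)
  = (\prod_(t < J) Z t (k t) (k t.+1)) *: delta_mx (k 0%N) (k J).
Proof.
elim: J => [|J IHJ]; first by rewrite !big_ord0 mul1r scale1r.
rewrite !big_ord_recr /= -mulrA -[_ * Z J * _]mulrA mulrA IHJ.
by rewrite -!mulmxE -scalemxAl mulmxA delta_mx_conj scalerA mulrC.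
Qed.

Lemma mxtrace_idem_conj n (E A : 'M[T]_n.+1) : E * E = E -> \tr (E * A * E) = \tr (E * A).
Proof. by move=> EE; rewrite -mulmxE mxtrace_mulC mulmxA mulmxE EE. Qed.

Lemma mxtrace_delta n (a : 'I_n) : \tr (delta_mx a a : 'M[T]_n) = 1.
Proof.
rewrite /mxtrace (bigD1 a) //= mxE !eqxx big1 ?addr0 // => i /negbTE ia.
by rewrite mxE ia.
Qed.

Lemma mxtrace_prod_cycle n j (Z : 'I_j.+1 -> 'M[T]_n.+1) :
  \tr (\prod_(t < j.+1) Z t) =
  \sum_(k : {ffun 'I_j.+1 -> 'I_n.+1}) \prod_(t < j.+1) Z t (k t) (k (ordS t)).
Proof.
have Z_sum t : Z t = \sum_(a : 'I_n.+1) delta_mx a a * Z t.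
  by rewrite -mulr_suml -mx1_sum_delta mul1r.
under eq_bigr do rewrite Z_sum.
rewrite bigA_distr_bigA /= raddf_sum /=; apply: eq_bigr => k _.
pose kn (i : nat) : 'I_n.+1 := k (inord (i %% j.+1)); pose Zn (i : nat) := Z (inord i).
have knE (t : 'I_j.+1) : kn t = k t by rewrite /kn modn_small // inord_val.
have knS (t : 'I_j.+1) : kn t.+1 = k (ordS t).
  by rewrite /kn; congr (k _); apply: val_inj; rewrite /= inordK // ltn_mod.
have kn_period : kn j.+1 = k ord0 by rewrite -(knE ord0) /kn modnn mod0n.
have delta_idem (a : 'I_n.+1) : delta_mx a a * delta_mx a a = delta_mx a a :> 'M[T]_n.+1.
  by rewrite -mulmxE mul_delta_mx.
transitivity (\tr ((\prod_(t < j.+1) (delta_mx (kn t) (kn t) * Zn t)) *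
                     delta_mx (kn j.+1) (kn j.+1))).
  under [in RHS]eq_bigr do rewrite knE /Zn inord_val.
  by rewrite kn_period !big_ord_recl -[in LHS]mulrA -(mxtrace_idem_conj _ (delta_idem _)) !mulrA.
rewrite delta_mx_walk kn_period -(knE ord0) mxtraceZ mxtrace_delta mulr1.
by apply: eq_bigr => t _; rewrite knE knS /Zn inord_val.
Qed.

Lemma mul_pid_mx_entry n c (A : 'M[T]_n) x y : (pid_mx c *m A) x y = (x < c)%N%:R * A x y.
Proof.
rewrite !mxE (bigD1 x) //= big1 ?addr0 => [|w wx]; first by rewrite mxE eqxx.
by rewrite mxE val_eqE eq_sym (negbTE wx) mul0r.
Qed.

Lemma mul_mx_pid_entry n c (A : 'M[T]_n) x y : (A *m pid_mx c) x y = A x y * (y < c)%N%:R.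
Proof.
rewrite !mxE (bigD1 y) //= big1 ?addr0 => [|w wy]; first by rewrite mxE eqxx andTb.
by rewrite mxE val_eqE (negbTE wy) mulr0.
Qed.

Lemma pid_mx_idem n c : pid_mx c * pid_mx c = pid_mx c :> 'M[T]_n.+1.
Proof. by rewrite -mulmxE mul_pid_mx minnn pid_mx_minv. Qed.

Definition cycle_weight n j (A : 'M[T]_n) (l : 'I_j -> nat) (k : {ffun 'I_j -> 'I_n}) : T :=
  \prod_(t < j) (A ^+ l t) (k t) (k (ordS t)).

Lemma mxtrace_prod_pid_exp n c j (A : 'M[T]_n.+1) (l : 'I_j.+1 -> nat) :
  \tr (\prod_(t < j.+1) (pid_mx c * A ^+ l t * pid_mx c)) =
  \sum_(k : {ffun 'I_j.+1 -> 'I_n.+1}) [forall t, (k t < c)%N]%:R * cycle_weight A l k.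
Proof.
rewrite mxtrace_prod_cycle; apply: eq_bigr => k _; rewrite /cycle_weight.
under eq_bigr do rewrite -!mulmxE mul_mx_pid_entry mul_pid_mx_entry.
case: forallP => [k_lt | /forallP]; last first.
  by rewrite negb_forall => /existsP [t /negbTE kt_ge]; rewrite mul0r (bigD1 t) //= kt_ge !mul0r.
by rewrite mul1r; apply: eq_bigr => t _; rewrite !k_lt mulr1 mul1r.
Qed.

Lemma mxtrace_pid_exp_sum n c j (A : 'M[T]_n.+1) (l : 'I_j.+1 -> nat) :
  \tr (pid_mx c * A ^+ (\sum_(t < j.+1) l t) * pid_mx c) =
  \sum_(k : {ffun 'I_j.+1 -> 'I_n.+1}) (k ord0 < c)%N%:R * cycle_weight A l k.
Proof.
rewrite mxtrace_idem_conj ?pid_mx_idem // expr_sum.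
rewrite (_ : _ * _ = \prod_(t < j.+1) (if t == ord0 then pid_mx c * A ^+ l t else A ^+ l t)).
  rewrite mxtrace_prod_cycle; apply: eq_bigr => k _.
  by rewrite /cycle_weight !big_ord_recl /= -mulmxE mul_pid_mx_entry -mulrA.
by rewrite [in RHS]big_ord_recl [in LHS]big_ord_recl /= mulrA.
Qed.

End CycleExpansion.

Section CycleArc.
Local Open Scope nat_scope.

Lemma walk_sum_bound (z w : nat -> nat) a d :
  (forall i, z i.+1 <= z i + w i) -> z (a + d) <= z a + \sum_(a <= i < a + d) w i.
Proof.
move=> zw; elim: d => [|d IHd]; first by rewrite addn0 big_geq ?addn0.
rewrite addnS big_nat_recr ?leq_addr //= addnA.
by apply: leq_trans (zw _) _; rewrite leq_add2r.
Qed.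

Lemma sum_mod_window n a (f : 'I_n.+1 -> nat) :
  \sum_(a <= i < a + n.+1) f (inord (i %% n.+1)) = \sum_(s < n.+1) f s.
Proof.
elim: a => [|a IHa].
  by rewrite add0n big_mkord; apply: eq_bigr => s _; rewrite modn_small // inord_val.
rewrite -IHa addSn big_nat_recr ?(big_ltn (m := a)) /=; try lia.
by rewrite modnDr addnC.
Qed.

Lemma cycle_arc_bound J (z w : 'I_J.+1 -> nat) :
  (forall t, z (ordS t) <= z t + w t) ->
  forall u t, z u + w t <= z (ordS t) + \sum_(s < J.+1) w s.
Proof.
move=> zw u t; have u_lt := ltn_ord u; have t_lt := ltn_ord t.
pose zn i := z (inord (i %% J.+1)); pose wn i := w (inord (i %% J.+1)).
have zn_ord (s : 'I_J.+1) : zn s = z s by rewrite /zn modn_small // inord_val.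
have znS i : zn i.+1 = z (ordS (inord (i %% J.+1))).
  by rewrite /zn; congr (z _); apply: val_inj; rewrite /= !inordK ?ltn_mod // -addn1 -modnDml addn1.
have zn_step i : zn i.+1 <= zn i + wn i by rewrite znS; apply: zw.
(* Go forward from [ordS t] to [u]: this arc of the cycle avoids the step t. *)
have [d d_lt zd] : exists2 d, d < J.+1 & zn (t.+1 + d) = z u.
  case: (ltnP t u) => [tu | ut]; first by exists (u - t.+1); rewrite ?subnKC ?zn_ord //; lia.
  exists (u + J.+1 - t.+1); first lia.
  by rewrite subnKC /zn ?modnDr -/(zn u) ?zn_ord //; lia.
have := walk_sum_bound t.+1 d zn_step; rewrite zd znS modn_small // inord_val /wn => arc_u.
rewrite -(sum_mod_window t.+1) (big_cat_nat (n := t.+1 + d)) ?leq_addr //; last lia.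
rewrite [t.+1 + J.+1]addSn big_nat_recr /=; last lia.
by rewrite modnDr modn_small // inord_val; lia.
Qed.

End CycleArc.

Lemma sum_ord_shift (V : nmodType) K p q (g : 'I_K.+1 -> V) :
  (p + q = K)%N -> (forall z : 'I_K.+1, (z < p)%N -> g z = 0) ->
  \sum_(z : 'I_K.+1) g z = \sum_(y : 'I_q.+1) g (inord (p + y)).
Proof.
move=> pqK g0; transitivity (\sum_(0 <= z < K.+1) g (inord z)).
  by rewrite big_mkord; apply: eq_bigr => z _; rewrite inord_val.
rewrite (big_cat_nat (n := p)) //=; last lia.
rewrite big1_seq ?add0r => [|z]; last first.
  by rewrite mem_index_iota => /andP [_ zp]; apply: g0; rewrite inordK //; lia.
rewrite -{1}[p]add0n big_addn.
have -> : (K.+1 - p = q.+1)%N by lia.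
by rewrite big_mkord; apply: eq_bigr => y _; rewrite [(y + p)%N]addnC.
Qed.

Lemma sum_ffun_shift (V : nmodType) (I : finType) K p q (g : {ffun I -> 'I_K.+1} -> V) :
  (p + q <= K)%N ->
  (forall k, g k != 0 -> forall t, (p <= k t < p + q.+1)%N) ->
  \sum_k g k = \sum_(y : {ffun I -> 'I_q.+1}) g [ffun t => inord (p + y t)].
Proof.
move=> pqK g_supp; have shift_lt (x : 'I_q.+1) : (p + x < K.+1)%N by have := ltn_ord x; lia.
pose shift (y : {ffun I -> 'I_q.+1}) : {ffun I -> 'I_K.+1} := [ffun t => inord (p + y t)].
pose unshift (k : {ffun I -> 'I_K.+1}) : {ffun I -> 'I_q.+1} := [ffun t => inord (k t - p)].
rewrite (bigID (fun k : {ffun I -> 'I_K.+1} => [forall t, p <= k t < p + q.+1]%N)) /=.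
rewrite [X in _ + X]big1 ?addr0 => [|k]; last first.
  by apply: contraNeq => /g_supp k_in; apply/forallP => t; apply: k_in.
rewrite (reindex_onto shift unshift) => [|k /forallP k_in]; last first.
  apply/ffunP => t; rewrite !ffunE; have /andP [pk kq] := k_in t.
  by apply: val_inj; rewrite /= inordK ?shift_lt // inordK ?subnKC //; lia.
apply: eq_bigl => y; apply/andP; split.
  by apply/forallP => t; rewrite /shift ffunE inordK // leq_addr ltn_add2l ltn_ord.
apply/eqP/ffunP => t; rewrite /shift /unshift !ffunE; apply: val_inj.
by rewrite /= inordK (inordK (shift_lt _)) addKn ?ltn_ord.
Qed.

Section BandedMatrices.
Variable T : comNzRingType.

Definition banded_mx n b (A : 'M[T]_n) : Prop :=
  forall x y : 'I_n, (b < x - y)%N || (b < y - x)%N -> A x y = 0.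

Lemma banded_mx_exp n b (A : 'M[T]_n.+1) l : banded_mx b A -> banded_mx (b * l) (A ^+ l).
Proof.
move=> Ab; elim: l => [|l IHl] x y xy.
  by rewrite expr0 mxE; case: eqVneq xy => [->|]; rewrite ?subnn.
rewrite exprSr -mulmxE mxE big1 // => z _.
have [xz | xz] := boolP ((b * l < x - z)%N || (b * l < z - x)%N); first by rewrite IHl ?mul0r.
have [zy | zy] := boolP ((b < z - y)%N || (b < y - z)%N); first by rewrite Ab ?mulr0.
by move: xy xz zy; rewrite mulnS; lia.
Qed.

Lemma window_exp K p q b (G : 'M[T]_K.+1) (F : 'M[T]_q.+1) :
  (p + q = K)%N -> banded_mx b G ->
  (forall a c : 'I_q.+1, F a c = G (inord (p + a)) (inord (p + c))) ->
  forall l (a c : 'I_q.+1), (b * l <= c)%N ->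
    (F ^+ l) a c = (G ^+ l) (inord (p + a)) (inord (p + c)).
Proof.
move=> pqK Gb FG; elim=> [|l IHl] a c cl; have a_lt := ltn_ord a; have c_lt := ltn_ord c.
  rewrite !expr0 !mxE; suff -> : (inord (p + a) == inord (p + c) :> 'I_K.+1) = (a == c) by [].
  by rewrite -val_eqE /= !inordK ?eqn_add2l //; lia.
rewrite !exprSr -!mulmxE !mxE (sum_ord_shift pqK) => [|z zp]; last first.
  by rewrite Gb ?mulr0 // inordK; lia.
apply: eq_bigr => y _; have y_lt := ltn_ord y.
have [yc | yc] := boolP ((b < y - c)%N || (b < c - y)%N).
  by rewrite [F _ _]FG !Gb ?mulr0 // ?inordK ?subnDl //; lia.
rewrite FG IHl //; move: yc cl; rewrite negb_or mulnS; lia.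
Qed.

End BandedMatrices.

Section CycleWindow.
Variable T : comNzRingType.

Definition long_step j b (l : 'I_j -> nat) (k : 'I_j -> nat) (t : 'I_j) : bool :=
  (b * l t < k t - k (ordS t))%N || (b * l t < k (ordS t) - k t)%N.

Lemma cycle_weight_long_step n j b (A : 'M[T]_n.+1) (l : 'I_j -> nat)
    (k : {ffun 'I_j -> 'I_n.+1}) t :
  banded_mx b A -> long_step b l (fun s => k s : nat) t -> cycle_weight A l k = 0.
Proof. by move=> Ab lt; rewrite /cycle_weight (bigD1 t) //= (banded_mx_exp Ab) ?mul0r. Qed.

Lemma cycle_weight_steps n j b (A : 'M[T]_n.+1) (l : 'I_j -> nat)
    (k : {ffun 'I_j -> 'I_n.+1}) :
  banded_mx b A -> cycle_weight A l k != 0 -> forall t, (k (ordS t) <= k t + b * l t)%N.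
Proof.
move=> Ab wk t; apply: contraR wk; rewrite -ltnNge => kt.
by rewrite (cycle_weight_long_step (t := t) Ab) ?eqxx //; apply/orP; right; lia.
Qed.

(* The coefficient of the cycle k in Tr(P B^l_0 P ... P B^l_j P) - Tr(P B^m P), P = P_c. *)
Definition cut_indicator j c (k : 'I_j.+1 -> nat) : T :=
  [forall t, (k t < c)%N]%:R - (k ord0 < c)%N%:R.

Lemma cut_indicator_exceeds j c (k : 'I_j.+1 -> nat) :
  cut_indicator c k != 0 -> exists u, (c <= k u)%N.
Proof.
rewrite /cut_indicator; case: forallP => [k_lt | /forallP]; first by rewrite k_lt subrr eqxx.
by rewrite negb_forall => /existsP [u ku] _; exists u; rewrite leqNgt.
Qed.

Lemma eq_cut_indicator j c (k1 k2 : 'I_j.+1 -> nat) :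
  k1 =1 k2 -> cut_indicator c k1 = cut_indicator c k2.
Proof.
by move=> k12; rewrite /cut_indicator (eq_forallb (fun t => congr1 (leq^~ c \o succn) (k12 t))) k12.
Qed.

Lemma cut_indicator_shift j c p (k : 'I_j.+1 -> nat) :
  cut_indicator (p + c) (fun t => p + k t)%N = cut_indicator c k.
Proof. by rewrite /cut_indicator (eq_forallb (fun t => ltn_add2l p _ _)) ltn_add2l. Qed.

Lemma cycle_term_support n N b c j (G : 'M[T]_n.+1) (l : 'I_j.+1 -> nat)
    (k : {ffun 'I_j.+1 -> 'I_n.+1}) :
  banded_mx b G -> (b * \sum_(t < j.+1) l t <= N)%N ->
  cut_indicator c (fun t => k t : nat) * cycle_weight G l k != 0 -> forall t, (c - N <= k t)%N.
Proof.
move=> Gb bmN ckw t; have [|u ku] := cut_indicator_exceeds (c := c) (k := fun t => k t : nat).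
  by apply: contraNneq ckw => ->; rewrite mul0r.
have wk : cycle_weight G l k != 0 by apply: contraNneq ckw => ->; rewrite mulr0.
have := cycle_arc_bound (cycle_weight_steps Gb wk) u (ord_pred t).
(* [simpl] identifies the two coercion paths that elaborate [k u] and [k t] *)
by rewrite ord_predK -big_distrr /=; simpl in *; lia.
Qed.

Lemma cycle_weight_window K p q N b j (G : 'M[T]_K.+1) (F : 'M[T]_q.+1) (l : 'I_j.+1 -> nat)
    (y : {ffun 'I_j.+1 -> 'I_q.+1}) :
  banded_mx b G -> (p + q = K)%N -> (b * \sum_(t < j.+1) l t <= N)%N ->
  (forall a c : 'I_q.+1, F a c = G (inord (p + a)) (inord (p + c))) ->
  cut_indicator N (fun t => y t : nat) != 0 ->
  cycle_weight F l y = cycle_weight G l [ffun t => inord (p + y t)].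
Proof.
move=> Gb pqK bmN FG cy; have [u yu] := cut_indicator_exceeds cy.
have shift_lt (x : 'I_q.+1) : (p + x < K.+1)%N by have := ltn_ord x; lia.
have Fb : banded_mx b F by move=> a c ac; rewrite FG Gb // !inordK ?shift_lt // !subnDl.
have [/existsP [t yt] | short] := boolP [exists t, long_step b l (fun s => y s : nat) t].
  rewrite (cycle_weight_long_step Fb yt) (cycle_weight_long_step (t := t) Gb) //.
  by rewrite /long_step !ffunE !inordK ?shift_lt // !subnDl.
have steps t : (y (ordS t) <= y t + b * l t)%N.
  move: short; rewrite negb_exists => /forallP/(_ t).
  by rewrite /long_step negb_or -!leqNgt => /andP [_]; rewrite leq_subLR.
(* y_(t+1) >= y_u - b (m - l_t) >= b l_t: the margin [window_exp] needs. *)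
apply: eq_bigr => t _; rewrite !ffunE (window_exp pqK Gb FG) //.
by have := cycle_arc_bound steps u t; rewrite -big_distrr /=; simpl in *; lia.
Qed.

Lemma cycle_sum_window K p q n N b j (G : 'M[T]_K.+1) (F : 'M[T]_q.+1) (l : 'I_j.+1 -> nat) :
  banded_mx b G -> (p + q = K)%N -> (p + N = n)%N -> (b * \sum_(t < j.+1) l t <= N)%N ->
  (forall a c : 'I_q.+1, F a c = G (inord (p + a)) (inord (p + c))) ->
  \sum_(k : {ffun 'I_j.+1 -> 'I_K.+1}) cut_indicator n (fun t => k t : nat) * cycle_weight G l k
  = \sum_(y : {ffun 'I_j.+1 -> 'I_q.+1}) cut_indicator N (fun t => y t : nat) * cycle_weight F l y.
Proof.
move=> Gb pqK pNn bmN FG.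
have shift_lt (x : 'I_q.+1) : (p + x < K.+1)%N by have := ltn_ord x; lia.
rewrite (sum_ffun_shift (p := p) (q := q)) ?pqK // => [|k /(cycle_term_support Gb bmN) k_ge t].
  apply: eq_bigr => y _.
  rewrite (eq_cut_indicator _ (fun t => congr1 val (ffunE _ t))) /=.
  rewrite (eq_cut_indicator _ (fun t => inordK (shift_lt (y t)))) -pNn cut_indicator_shift.
  have [-> | cy] := eqVneq (cut_indicator N (fun t => y t : nat)) 0; first by rewrite !mul0r.
  by rewrite (cycle_weight_window Gb pqK bmN FG cy).
have kt_lt : (k t < K.+1)%N := ltn_ord _.
by apply/andP; split; have := k_ge t; simpl in *; lia.
Qed.

End CycleWindow.

Section TraceTerms.
Variable R : realType.
Local Notation C := R[i].

Definition trunc_mx (B : nat -> nat -> C) K : 'M[C]_K.+1 := \matrix_(u, v) B u v.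

Lemma banded_trunc_mx b B K : banded b B -> banded_mx b (trunc_mx B K).
Proof. by move=> Bb x y xy; rewrite mxE Bb. Qed.

Lemma powB_trunc_mx b B K l x y : banded b B -> (x + b * l <= K)%N -> (y <= K)%N ->
  (trunc_mx B K ^+ l) (inord x) (inord y) = powB b B l x y.
Proof.
move=> Bb; elim: l x => [|l IHl] x xl yK.
  by rewrite expr0 mxE -val_eqE /= !inordK //; lia.
rewrite /= (big_ord_widen K.+1 (fun t => B x t * powB b B l t y)); last lia.
rewrite exprS -mulmxE mxE (bigID (fun z : 'I_K.+1 => (z < x + b + 1)%N)) /=.
rewrite [X in _ + X]big1 ?addr0 => [|z]; last first.
  by rewrite -leqNgt => zx; rewrite mxE inordK ?Bb ?mul0r //; lia.
apply: eq_bigr => z zx; rewrite mxE inordK -?IHl ?inord_val //; lia.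
Qed.

Lemma trBP_cycle_sum b B K n j (l : 'I_j.+1 -> nat) :
  banded b B -> (n.+1 + b * \sum_(t < j.+1) l t <= K.+1)%N ->
  trBP b n.+1 B l = \sum_(k : {ffun 'I_j.+1 -> 'I_K.+1})
                      [forall t, (k t < n.+1)%N]%:R * cycle_weight (trunc_mx B K) l k.
Proof.
move=> Bb nK; rewrite (sum_ffun_shift (p := 0) (q := n)); first last.
- by move=> k; case: forallP => [k_lt _ t | _]; [rewrite k_lt | rewrite mul0r eqxx].
- lia.
rewrite /trBP; apply: eq_bigr => y _; rewrite (_ : [forall t, _] = true) ?mul1r; last first.
  by apply/forallP => t; rewrite ffunE add0n inordK ?ltn_ord // (leq_trans (ltn_ord _)) //; lia.
rewrite /cycle_weight; apply: eq_bigr => t _; rewrite !ffunE !add0n (powB_trunc_mx Bb) //.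
  have lt_sum : (l t <= \sum_(s < j.+1) l s)%N by rewrite (bigD1 t) //= leq_addr.
  have := leq_mul (leqnn b) lt_sum; have := ltn_ord (y t); simpl in *; lia.
have := ltn_ord (y (ordS t)); simpl in *; lia.
Qed.

Lemma trBmP_trace b B K n m : banded b B -> (n + b * m <= K.+1)%N ->
  trBmP b n B m = \tr (pid_mx n * trunc_mx B K ^+ m * pid_mx n).
Proof.
move=> Bb nK; rewrite /trBmP (big_ord_widen K.+1 (fun k => powB b B m k k)); last lia.
rewrite big_mkcond /mxtrace; apply: eq_bigr => x _.
rewrite -!mulmxE mul_mx_pid_entry mul_pid_mx_entry.
case: ltnP => [xn | _] /=; last by rewrite !mul0r.
by rewrite mul1r mulr1 -[in RHS](inord_val x) (powB_trunc_mx Bb) //; lia.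
Qed.

Lemma Pminus_pid_mx N : Pminus R N = pid_mx N.
Proof. by apply/matrixP => i k; rewrite !mxE. Qed.

Definition window_at (B : nat -> nat -> C) n N : 'M[C]_((2 * N).+1) :=
  truncZ (fun r s => extZ B (n%:Z + r) (n%:Z + s)) N.

Lemma window_at_trunc B n N (a c : 'I_(2 * N).+1) : (N <= n)%N ->
  window_at B n N a c = trunc_mx B (n + N) (inord (n - N + a)) (inord (n - N + c)).
Proof.
move=> Nn; have a_lt := ltn_ord a; have c_lt := ltn_ord c.
rewrite /window_at /truncZ /trunc_mx !mxE /extZ.
have -> : n%:Z + (a%:Z - N%:Z) = (n - N + a)%N%:Z by lia.
have -> : n%:Z + (c%:Z - N%:Z) = (n - N + c)%N%:Z by lia.
by rewrite /= !inordK //; lia.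
Qed.

Lemma trace_defect_window b B M m n j (l : 'I_j.+1 -> nat) :
  banded b B -> (m <= M)%N -> (b * M < n)%N -> (\sum_(t < j.+1) l t = m)%N ->
  let P := Pminus R (b * M) in let W := window_at B n (b * M) in
  trBP b n B l - trBmP b n B m =
  \tr (\prod_(t < j.+1) (P * W ^+ l t * P)) - \tr (P * W ^+ m * P).
Proof.
move=> Bb mM Mn lm P W; rewrite {}/P {}/W; set N := (b * M)%N.
have bmN : (b * m <= N)%N by rewrite leq_mul2l mM orbT.
case: n Mn => [// | n] Mn.
rewrite (trBP_cycle_sum (K := n.+1 + N) Bb) ?lm; last lia.
rewrite (trBmP_trace (K := n.+1 + N) Bb); last lia.
rewrite -lm mxtrace_pid_exp_sum -sumrB Pminus_pid_mx mxtrace_prod_pid_exp.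
rewrite mxtrace_pid_exp_sum -sumrB; under eq_bigr do rewrite -mulrBl.
under [in RHS]eq_bigr do rewrite -mulrBl.
apply: (cycle_sum_window (p := n.+1 - N) (q := (2 * N)%N) (banded_trunc_mx Bb)).
- lia.
- lia.
- by rewrite lm.
- by move=> a c; apply: window_at_trunc; lia.
Qed.

Lemma Cmn_eq_Dm b B M m n : banded b B -> (1 <= m <= M)%N -> (b * M < n)%N ->
  Cmn b m n B = Dm m (window_at B n (b * M)).
Proof.
move=> Bb /andP [m_gt0 mM] Mn; rewrite /Cmn /Dm /= [in RHS]big_ltn ?ltnS //.
(* The term j = 1 of D_m vanishes: its only composition is l = (m). *)
rewrite [X in _ = X + _](_ : _ = 0) ?add0r; last first.
  rewrite big1 ?mulr0 // => l /andP [_ /eqP]; rewrite !big_ord1 => ->.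
  by rewrite subrr raddf0 mul0r.
apply: eq_big_nat => j /andP [j_gt1 _]; case: j j_gt1 => // j _.
congr (_ * _); apply: eq_bigr => l /andP [_ /eqP lm]; congr (_ / _).
by rewrite (trace_defect_window (l := fun t => l t) Bb mM Mn lm) raddfB.
Qed.

Lemma Dm_cvg N m (Fs : nat -> 'M[C]_((2 * N).+1)) F :
  cvg_mx Fs F -> cvg_seq (fun j => Dm m (Fs j)) (Dm m F).
Proof.
move=> FsF; have PWP_cvg e : cvg_mx (fun j => Pminus R N * Fs j ^+ e * Pminus R N)
                                    (Pminus R N * F ^+ e * Pminus R N).
  exact: cvg_mxM (cvg_mxM (cvg_mx_cst _) (cvg_mx_exp _ FsF)) (cvg_mx_cst _).
apply: cvg_seq_sum => j _; apply: cvg_seqM; first exact: cvg_seq_cst.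
apply: cvg_seq_sum => l _; apply: cvg_seqM; last exact: cvg_seq_cst.
apply/cvg_mxtrace/cvg_mxB; last exact: PWP_cvg.
by apply: cvg_mx_prod => t _; apply: PWP_cvg.
Qed.

End TraceTerms.

Theorem lemma4p3 (R : realType) (Bs : nat -> nat -> nat -> R[i]) (b : nat)
  (hband : forall n : nat, banded b (Bs n))
  (nj : nat -> nat) (hnj : forall j : nat, (nj j < nj j.+1)%N)
  (BR : int -> int -> R[i]) (hR : right_limit Bs nj BR)
  (M : nat) :
  forall m : nat, (1 <= m <= M)%N ->
    cvgC (fun j => Cmn b m (nj j) (Bs (nj j))) (Dm m (truncZ BR (b * M))).
Proof.
move=> m mM.
have nj_ge j : (j <= nj j)%N by elim: j => // j IHj; apply: leq_ltn_trans IHj (hnj j).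
have window_cvg : cvg_mx (fun j => window_at (Bs (nj j)) (nj j) (b * M)) (truncZ BR (b * M)).
  move=> a c; rewrite [in X in cvg_seq _ X]mxE.
  by apply: (eq_cvg_seq (hR.1 _ _)) => j; rewrite !mxE.
apply: (cvg_seq_eventually (Dm_cvg m window_cvg) (J0 := (b * M).+1)) => j jM.
by rewrite (Cmn_eq_Dm (hband _) mM) // (leq_trans jM (nj_ge j)).
Qed.
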